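(* Let $\mathbf x\in\mathcal D^m$ and $\mathbf q_n(t)=\sum_{i:\,t^n_i\le t}(\mathbf{x}(t^n_{i+1})-\mathbf{x}(t^n_i))(\mathbf{x}(t^n_{i+1})-\mathbf{x}(t^n_i))^T$. Then $(\mathbf q_n)$ converges in $(\mathcal D^{m\times m},d)$ if and only if it converges in the product space $(\mathcal D,d)^{m\times m}$ (i.e. each entry converges in $(\mathcal D,d)$).
   Context: Let $\pi=(\pi_n)_{n\ge1}$ be a sequence of partitions $\pi_n=(t^n_0,\dots,t^n_{k_n})$ with $0=t^n_0<\dots<t^n_{k_n}<\infty$, $t^n_{k_n}\uparrow\infty$, and mesh tending to $0$ on compacts; sums over $i$ run over $0\le i<k_n$. $\mathcal{D}$, $\mathcal{D}^m$, $\mathcal{D}^{m\times m}$ denote the spaces of càdlàg functions $[0,\infty)\to\mathbb{R}$, $\mathbb R^m$, $\mathbb{R}^{m\times m}$, each with a metric $d$ inducing its Skorokhod $J_1$ topology. *)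

From HB Require Import structures.
From mathcomp Require Import all_boot all_order all_algebra.
From mathcomp Require Import all_classical all_reals all_analysis.
Set Implicit Arguments. Unset Strict Implicit. Unset Printing Implicit Defensive.
Import Order.TTheory GRing.Theory Num.Theory.
Import numFieldNormedType.Exports.
Local Open Scope classical_set_scope.
Local Open Scope ring_scope.

(* Functions on [0,oo) are represented as functions R -> V; only their
   restriction to [0,oo) matters in all definitions below. *)

Section Skorokhod.
Variable R : realType.

Definition cadlag (V : normedModType R) (f : R -> V) : Prop :=
  (forall t : R, 0 <= t -> f x @[x --> t^'+] --> f t) /\
  (forall t : R, 0 < t -> cvg (f x @[x --> t^'-])).

Definition time_change (lam : R -> R) : Prop :=
  lam 0 = 0 /\
  (forall s u, 0 <= s -> s < u -> lam s < lam u) /\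
  {within [set s | 0 <= s], continuous lam} /\
  (forall s, 0 <= s -> exists u, 0 <= u /\ lam u = s).

(* Convergence in the Skorokhod J1 topology on D([0,oo), V)
   (Jacod-Shiryaev, Thm VI.1.14 (b)): there are time changes lam_n with
   sup_s |lam_n s - s| -> 0 and, for every N, sup_{s <= N} |u_n (lam_n s) - f s| -> 0. *)
Definition J1_cvg (V : normedModType R) (u : nat -> R -> V) (f : R -> V) : Prop :=
  exists lam : nat -> R -> R,
    (forall n, time_change (lam n)) /\
    (forall e : R, 0 < e -> exists N : nat, forall n, (N <= n)%N ->
        forall s, 0 <= s -> `|lam n s - s| <= e) /\
    (forall T : R, 0 < T -> forall e : R, 0 < e -> exists N : nat,
        forall n, (N <= n)%N -> forall s, 0 <= s -> s <= T ->
          `|u n (lam n s) - f s| <= e).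

Definition D_convergent (V : normedModType R) (u : nat -> R -> V) : Prop :=
  exists f : R -> V, cadlag f /\ J1_cvg u f.

Definition partition_seq (t : nat -> nat -> R) (k : nat -> nat) : Prop :=
  (forall n, t n 0%N = 0) /\
  (forall n i, (i < k n)%N -> t n i < t n i.+1) /\
  (forall n, t n (k n) <= t n.+1 (k n.+1)) /\
  (forall M : R, exists N : nat, forall n, (N <= n)%N -> M < t n (k n)) /\
  (forall T : R, 0 < T -> forall e : R, 0 < e -> exists N : nat,
      forall n, (N <= n)%N -> forall i, (i < k n)%N -> t n i <= T ->
        t n i.+1 - t n i <= e).

Definition qvar (m : nat) (t : nat -> nat -> R) (k : nat -> nat)
  (x : R -> 'cV[R]_m) (n : nat) (s : R) : 'M[R]_(m, m) :=
  \sum_(i < k n | t n i <= s)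
    ((x (t n i.+1) - x (t n i)) *m (x (t n i.+1) - x (t n i))^T).

End Skorokhod.

From HB Require Import structures.
From mathcomp Require Import all_boot all_order all_algebra.
From mathcomp Require Import all_classical all_reals all_analysis.
From mathcomp Require Import ring lra.
Set Implicit Arguments. Unset Strict Implicit. Unset Printing Implicit Defensive.
Import Order.TTheory GRing.Theory Num.Theory.
Import numFieldNormedType.Exports.
Local Open Scope ring_scope.
Local Open Scope classical_set_scope.

(* Each entry (a, b) of q_n converges along its own time changes mu^ab_n, and
   the task is to find one sequence lam_n serving all entries.  As q_n is a
   step function jumping only at partition points, mu^ab_n must eventually map
   every jump time u of the limit entry onto the left end point of the cell
   (t^n_j, t^n_(j+1)] containing u, and x itself has to jump at u.  So we let
   lam_n be the piecewise linear time change mapping, in every short cell, a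
   point carrying a near-maximal jump of x onto t^n_j: then lam_n agrees with
   every mu^ab_n at the jump times of the limits.  Finally, retiming a cadlag
   function by increasing maps that tend to the identity and eventually fix its
   jump times perturbs it little, uniformly on compacts, which transfers the
   convergence from mu^ab_n to lam_n. *)

Lemma eventuallyP (P : nat -> Prop) :
  (\forall n \near \oo, P n) <-> exists N, forall n, (N <= n)%N -> P n.
Proof. by split=> [[N _ PN]|[N PN]]; exists N => // n /PN. Qed.

Section MatrixEntries.
Variable R : realFieldType.

Lemma mx_entry_norm_le m n (M : 'M[R]_(m, n)) i j : `|M i j| <= `|M|.
Proof.
rewrite [X in _ <= X]/Num.norm /= mx_normrE.
exact: (le_bigmax _ (fun ij : 'I_m * 'I_n => `|M ij.1 ij.2|) (i, j)).
Qed.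

Lemma mx_norm_le m n (M : 'M[R]_(m, n)) e :
  0 <= e -> (forall i j, `|M i j| <= e) -> `|M| <= e.
Proof.
move=> e_ge0 Me; rewrite [X in X <= _]/Num.norm /= mx_normrE.
by apply/bigmax_leP; split => // -[i j] _; exact: Me.
Qed.

Lemma cvg_mxP (T : Type) (F : set_system T) (FF : Filter F) m n
    (f : T -> 'M[R]_(m, n)) (l : 'M[R]_(m, n)) :
  f x @[x --> F] --> l <-> forall i j, f x i j @[x --> F] --> l i j.
Proof.
split=> [/cvgrPdist_le fl i j | fl].
  apply/cvgrPdist_le => e e0; apply: filterS (fl e e0) => y; apply: le_trans.
  by have := mx_entry_norm_le (l - f y) i j; rewrite !mxE.
apply/cvgrPdist_le => e e0.
have : \forall y \near F, forall ij : 'I_m * 'I_n,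
    `|l ij.1 ij.2 - f y ij.1 ij.2| <= e.
  by apply: filter_forall => -[i j]; move/cvgrPdist_le: (fl i j); apply.
apply: filterS => y fy; apply: mx_norm_le (ltW e0) _ => i j.
by rewrite !mxE; exact: (fy (i, j)).
Qed.

Lemma is_cvg_mxP (T : Type) (F : set_system T) (FF : ProperFilter F) m n
    (f : T -> 'M[R]_(m, n)) :
  cvg (f x @[x --> F]) <-> forall i j, cvg (f x i j @[x --> F]).
Proof.
split=> [/cvg_ex[l /cvg_mxP fl] i j | fl]; first by apply/cvg_ex; exists (l i j).
apply/cvg_ex; exists (\matrix_(i, j) lim (f x i j @[x --> F])).
by apply/cvg_mxP => i j; rewrite mxE; exact: fl.
Qed.

End MatrixEntries.

Section J1Convergence.
Variable R : realType.

Definition cvg_to_id (lam : nat -> R -> R) : Prop :=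
  forall e : R, 0 < e -> exists N : nat, forall n, (N <= n)%N ->
    forall s, 0 <= s -> `|lam n s - s| <= e.

Definition cvg_along (V : normedModType R) (lam : nat -> R -> R)
    (u : nat -> R -> V) (f : R -> V) : Prop :=
  forall T : R, 0 < T -> forall e : R, 0 < e -> exists N : nat,
    forall n, (N <= n)%N -> forall s, 0 <= s -> s <= T ->
      `|u n (lam n s) - f s| <= e.

Lemma J1_cvgE (V : normedModType R) (u : nat -> R -> V) f :
  J1_cvg u f = exists lam, [/\ forall n, time_change (lam n),
    cvg_to_id lam & cvg_along lam u f].
Proof.
by rewrite propeqE; split=> -[lam]; [case=> ? [? ?] | case]; exists lam.
Qed.

Variable m : nat.
Implicit Types (u : nat -> R -> 'M[R]_(m, m)) (f : R -> 'M[R]_(m, m)).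

Lemma cadlag_mxP f : cadlag f <-> forall i j, cadlag (fun s => f s i j).
Proof.
split=> [[fr fl] i j | fij]; first split.
- by move=> s s0; move/cvg_mxP: (fr s s0); apply.
- by move=> s s0; move/is_cvg_mxP: (fl s s0); apply.
split=> s s0.
- by apply/cvg_mxP => i j; have [+ _] := fij i j; apply.
- by apply/is_cvg_mxP => i j; have [_] := fij i j; apply.
Qed.

Lemma cvg_alongP lam u f : cvg_along lam u f <->
  forall i j, cvg_along lam (fun n s => u n s i j) (fun s => f s i j).
Proof.
split=> [uf i j T T0 e e0 | uf T T0 e e0].
  have [N uN] := uf T T0 e e0; exists N => n Nn s s0 sT.
  apply: le_trans (uN n Nn s s0 sT).
  by have := mx_entry_norm_le (u n (lam n s) - f s) i j; rewrite !mxE.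
apply/eventuallyP; apply: filterS (_ : \forall n \near \oo, forall ij : 'I_m * 'I_m,
    forall s, 0 <= s -> s <= T -> `|u n (lam n s) ij.1 ij.2 - f s ij.1 ij.2| <= e).
  move=> n un s s0 sT; apply: mx_norm_le (ltW e0) _ => i j.
  by rewrite !mxE; exact: (un (i, j)).
by apply: filter_forall => -[i j]; apply/eventuallyP; exact: uf.
Qed.

Lemma D_convergent_mx_entry u i j :
  D_convergent u -> D_convergent (fun n s => u n s i j).
Proof.
move=> [f [/cadlag_mxP fc]]; rewrite J1_cvgE => -[lam [lam_tc lam_id /cvg_alongP uf]].
by exists (fun s => f s i j); split; [exact: fc | rewrite J1_cvgE; exists lam].
Qed.

End J1Convergence.

Section IncreasingSequences.
Variables (R : numDomainType) (c : nat -> R) (K : nat).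
Hypothesis c_lt : forall j, (j < K)%N -> c j < c j.+1.

Lemma incr_seq_lt i j : (i < j <= K)%N -> c i < c j.
Proof.
move=> /andP[]; elim: j => [//|j IH].
rewrite ltnS leq_eqVlt => /predU1P[-> jK|ij jK]; first exact: c_lt.
exact: lt_trans (IH ij (ltnW jK)) (c_lt jK).
Qed.

Lemma incr_seq_le i j : (i <= j <= K)%N -> c i <= c j.
Proof.
move=> /andP[]; rewrite leq_eqVlt => /predU1P[-> //|ij jK].
by apply/ltW/incr_seq_lt; rewrite ij.
Qed.

Lemma incr_seq_inj i j : (i <= K)%N -> (j <= K)%N -> c i = c j -> i = j.
Proof.
move=> iK jK cij; have [ij|ji|//] := ltngtP i j.
- by have := @incr_seq_lt i j; rewrite ij jK cij ltxx => /(_ isT).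
- by have := @incr_seq_lt j i; rewrite ji iK cij ltxx => /(_ isT).
Qed.

End IncreasingSequences.

Section TimeChange.
Variable R : realType.
Implicit Types (lam : R -> R) (s u y : R).

Lemma time_change_ge0 lam : time_change lam -> forall s, 0 <= s -> 0 <= lam s.
Proof.
move=> [lam0 [lam_lt _]] s; rewrite le_eqVlt => /predU1P[<-|s0]; first by rewrite lam0.
by rewrite -lam0; apply/ltW/lam_lt.
Qed.

Lemma time_change_le lam : time_change lam ->
  forall s u, 0 <= s -> s <= u -> lam s <= lam u.
Proof.
move=> [_ [lam_lt _]] s u s0; rewrite le_eqVlt => /predU1P[<-//|su].
exact/ltW/lam_lt.
Qed.

Lemma time_change_inj lam : time_change lam ->
  forall s u, 0 <= s -> 0 <= u -> lam s = lam u -> s = u.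
Proof.
move=> [_ [lam_lt _]] s u s0 u0 su.
have [/(lam_lt _ _ s0)|/(lam_lt _ _ u0)|//] := ltgtP s u; by rewrite su ltxx.
Qed.

Definition time_change_inv lam y := xget 0 [set s | 0 <= s /\ lam s = y].

Lemma time_change_invK lam y : time_change lam -> 0 <= y ->
  0 <= time_change_inv lam y /\ lam (time_change_inv lam y) = y.
Proof. by move=> [_ [_ [_ lam_onto]]] /lam_onto ex; exact: (xgetPex 0 ex). Qed.

End TimeChange.

(* The piecewise linear time change through the knots (a j, b j), j <= K,
   extended by a translation beyond a K. *)
Section PiecewiseLinear.
Variable R : realType.
Variables (a b : nat -> R) (K : nat).
Hypotheses (a0 : a 0%N = 0) (b0 : b 0%N = 0)
  (a_lt : forall j, (j < K)%N -> a j < a j.+1)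
  (b_lt : forall j, (j < K)%N -> b j < b j.+1).

Definition pl_piece j (s : R) :=
  (b j.+1 - b j) / (a j.+1 - a j) * (Num.min (Num.max s (a j)) (a j.+1) - a j).

Definition pl_sum n (s : R) := \sum_(0 <= j < n) pl_piece j s.

Definition pl_interp (s : R) := pl_sum K s + Num.max (s - a K) 0.

Let a_le := incr_seq_le a_lt.
Let b_le := incr_seq_le b_lt.

Lemma pl_slope_gt0 j : (j < K)%N -> 0 < (b j.+1 - b j) / (a j.+1 - a j).
Proof. by move=> jK; rewrite divr_gt0 // subr_gt0; [exact: b_lt|exact: a_lt]. Qed.

Lemma pl_piece_lo j s : (j < K)%N -> s <= a j -> pl_piece j s = 0.
Proof.
move=> jK sa; rewrite /pl_piece max_r // min_l ?subrr ?mulr0 //; exact/ltW/a_lt.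
Qed.

Lemma pl_piece_hi j s : (j < K)%N -> a j.+1 <= s -> pl_piece j s = b j.+1 - b j.
Proof.
move=> jK sa; have aj := a_lt jK.
rewrite /pl_piece max_l ?(le_trans (ltW aj) sa) // min_r //.
by rewrite divfK // subr_eq0 gt_eqF.
Qed.

Lemma pl_piece_mid j s : a j <= s -> s <= a j.+1 ->
  pl_piece j s = (b j.+1 - b j) / (a j.+1 - a j) * (s - a j).
Proof. by move=> aj ja; rewrite /pl_piece max_l // min_l. Qed.

Lemma pl_piece_le j s u : (j < K)%N -> s <= u -> pl_piece j s <= pl_piece j u.
Proof.
move=> jK su; rewrite /pl_piece; apply: ler_wpM2l; first exact/ltW/pl_slope_gt0.
by rewrite lerD2r; apply: le_min2 => //; exact: le_max2.
Qed.

Lemma pl_sum_hi n s : (n <= K)%N -> a n <= s -> pl_sum n s = b n.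
Proof.
elim: n => [|n IH] nK ans; first by rewrite /pl_sum big_geq.
have an := a_lt nK.
rewrite /pl_sum big_nat_recr //= -/(pl_sum n s) IH ?pl_piece_hi ?(ltnW nK) //.
  by rewrite addrC subrK.
exact: le_trans (ltW an) ans.
Qed.

Lemma pl_sum_lo n n' s : (n <= n' <= K)%N -> s <= a n -> pl_sum n' s = pl_sum n s.
Proof.
move=> /andP[]; elim: n' => [|n' IH]; first by rewrite leqn0 => /eqP ->.
rewrite leq_eqVlt => /predU1P[-> //|]; rewrite ltnS => nn' n'K san.
rewrite /pl_sum big_nat_recr //= -/(pl_sum n' s) IH ?(ltnW n'K) //.
by rewrite pl_piece_lo ?addr0 // (le_trans san) // a_le // nn' ltnW.
Qed.

Lemma pl_sum_le n s u : (n <= K)%N -> s <= u -> pl_sum n s <= pl_sum n u.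
Proof.
move=> nK su; apply: ler_sum_nat => j /andP[_ jn].
exact: pl_piece_le (leq_trans jn nK) su.
Qed.

Lemma pl_interp_knot j : (j <= K)%N -> pl_interp (a j) = b j.
Proof.
move=> jK; rewrite /pl_interp (@pl_sum_lo j K (a j)) ?jK ?leqnn // pl_sum_hi //.
by rewrite max_r ?addr0 // subr_le0 a_le // jK leqnn.
Qed.

Lemma pl_interp0 : pl_interp 0 = 0.
Proof. by rewrite -[in LHS]a0 pl_interp_knot. Qed.

Lemma pl_sum_lt n s u : (n <= K)%N -> 0 <= s -> s < u -> s < a n ->
  pl_sum n s < pl_sum n u.
Proof.
elim: n => [|n IH] nK s0 su san; first by move: san; rewrite a0 ltNge s0.
rewrite /pl_sum !big_nat_recr //= -!/(pl_sum n _).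
have [san'|ans] := ltrP s (a n).
  by apply: ltr_leD; [exact: IH (ltnW nK) s0 su san' | exact/pl_piece_le/ltW].
apply: ler_ltD; first exact/pl_sum_le/ltW/su/ltnW.
rewrite pl_piece_mid ?(ltW san) // /pl_piece ltr_pM2l ?pl_slope_gt0 // ltrD2r.
by rewrite max_l ?(le_trans ans (ltW su)) // lt_min su san.
Qed.

Lemma pl_interp_lt s u : 0 <= s -> s < u -> pl_interp s < pl_interp u.
Proof.
move=> s0 su; rewrite /pl_interp; have [saK|aKs] := ltrP s (a K).
  apply: ltr_leD; first exact: pl_sum_lt.
  by apply: le_max2; rewrite // lerD2r ltW.
have aKu := le_trans aKs (ltW su).
rewrite !pl_sum_hi // ltrD2l !max_l ?subr_ge0 //; by rewrite ltrD2r.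
Qed.

(* On [a n, a n.+1], [pl_sum n.+1 s - s] is a convex combination of
   [b n - a n] and [b n.+1 - a n.+1]. *)
Lemma pl_sum_dev e n s : (forall j, (j <= K)%N -> `|a j - b j| <= e) ->
  (n <= K)%N -> 0 <= s -> s <= a n -> `|pl_sum n s - s| <= e.
Proof.
move=> abe; elim: n s => [|n IH] s nK s0 san.
  have -> : s = 0 by apply/le_anti; rewrite s0 -a0 san.
  rewrite /pl_sum big_geq // subr0 normr0.
  exact: le_trans (normr_ge0 _) (abe 0%N (leq0n K)).
have [sa|asn] := lerP s (a n).
  by rewrite (@pl_sum_lo n) ?IH ?(ltnW nK) ?leqnSn.
have an := a_lt nK; have da : a n.+1 - a n != 0 by rewrite subr_eq0 gt_eqF.
rewrite /pl_sum big_nat_recr //= -/(pl_sum n s) pl_sum_hi ?(ltnW nK) ?(ltW asn) //.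
rewrite pl_piece_mid ?(ltW asn) //.
set th := (s - a n) / (a n.+1 - a n).
have th0 : 0 <= th by rewrite divr_ge0 ?subr_ge0 ?ltW.
have th1 : 1 - th >= 0.
  by rewrite subr_ge0 ler_pdivrMr ?mul1r ?lerD2r ?subr_gt0.
have -> : b n + (b n.+1 - b n) / (a n.+1 - a n) * (s - a n) - s =
    (1 - th) * (b n - a n) + th * (b n.+1 - a n.+1) by rewrite /th; field.
apply: le_trans (ler_normD _ _) _.
rewrite normrM (ger0_norm th1) normrM (ger0_norm th0).
have -> : e = (1 - th) * e + th * e by rewrite -mulrDl subrK mul1r.
by apply: lerD; apply: ler_wpM2l; rewrite // distrC abe ?(ltnW nK).
Qed.

Lemma pl_interp_dev e s : (forall j, (j <= K)%N -> `|a j - b j| <= e) ->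
  0 <= s -> `|pl_interp s - s| <= e.
Proof.
move=> abe s0; rewrite /pl_interp; have [saK|aKs] := lerP s (a K).
  by rewrite max_r ?addr0 ?subr_le0 //; exact: pl_sum_dev.
rewrite pl_sum_hi ?(ltW aKs) // max_l ?subr_ge0 ?(ltW aKs) //.
have -> : b K + (s - a K) - s = b K - a K by ring.
by rewrite distrC abe.
Qed.

Lemma pl_interp_continuous : continuous pl_interp.
Proof.
have piece_cont j : continuous (pl_piece j).
  pose clamp s := Num.min (Num.max s (a j)) (a j.+1).
  have clamp_cont : continuous clamp.
    move=> s; apply: (@min_fun_continuous _ _ _ (Num.max ^~ (a j)) (fun=> _)).
      by apply: (@max_fun_continuous _ _ _ id (fun=> _)); [move=> ?|exact: cst_continuous].
    exact: cst_continuous.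
  move=> s; apply: (@continuousM _ _ (fun=> _) (fun s => clamp s - a j)).
    exact: cst_continuous.
  by apply: (@continuousB _ _ _ clamp (fun=> _)); [exact: clamp_cont|exact: cst_continuous].
have sum_cont n : continuous (pl_sum n).
  elim: n => [|n IH].
    have -> : pl_sum 0 = fun=> 0 by apply/funext => u; rewrite /pl_sum big_geq.
    exact: cst_continuous.
  have -> : pl_sum n.+1 = (pl_sum n + pl_piece n)%R.
    by apply/funext => u; rewrite /pl_sum big_nat_recr.
  by move=> s; apply: continuousD (IH s) (piece_cont n s).
have tail_cont : continuous (fun s => Num.max (s - a K) 0).
  move=> s; apply: (@max_fun_continuous _ _ _ (fun s => s - a K) (fun=> _)).
    by move=> u; apply: (@continuousB _ _ _ id (fun=> _)); [move=> ?|exact: cst_continuous].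
  exact: cst_continuous.
by move=> s; apply: continuousD (sum_cont K s) (tail_cont s).
Qed.

Lemma pl_interp_time_change : time_change pl_interp.
Proof.
have aK0 : 0 <= a K by rewrite -a0 a_le ?leqnn.
have bK0 : 0 <= b K by rewrite -b0 b_le ?leqnn.
have pl_cont := continuous_subspaceT pl_interp_continuous.
split; first exact: pl_interp0.
split; first by move=> s u s0; exact: pl_interp_lt.
split=> [|y y0]; first exact: pl_cont.
have ly : pl_interp (y + a K) = b K + y.
  by rewrite /pl_interp pl_sum_hi ?lerDr // addrK max_l.
have := @IVT R pl_interp 0 (y + a K) y (addr_ge0 y0 aK0) (pl_cont _).
rewrite pl_interp0 ly min_l ?max_r ?addr_ge0 //.
case=> [|c /[!in_itv] /= /andP[c0 _] yc]; first by rewrite y0 lerDr.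
by exists c.
Qed.

End PiecewiseLinear.

Section CadlagLocal.
Variables (R : realType) (V : normedModType R).

Definition left_lim (f : R -> V) u := lim (f x @[x --> u^'-]).
Definition jump (f : R -> V) u := f u - left_lim f u.

Lemma cvg_dist_le (T : Type) (F : set_system T) {FF : ProperFilter F}
    (g : T -> V) (l c : V) (e : R) :
  g x @[x --> F] --> l -> (\forall y \near F, `|c - g y| <= e) -> `|c - l| <= e.
Proof.
move=> /cvgrPdist_le gl cg; apply/ler_addgt0Pr => r r0.
have [y [cy ly]] := filter_ex (filterI cg (gl r r0)).
by rewrite -(subrK (g y) c) -addrA (le_trans (ler_normD _ _)) // lerD // distrC.
Qed.

Lemma ler_dist_split (a b c : V) (e1 e2 : R) :
  `|c - a| <= e1 -> `|c - b| <= e2 -> `|b - a| <= e1 + e2.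
Proof.
move=> ca cb; have -> : b - a = (c - a) - (c - b) by rewrite opprB [RHS]addrC [RHS]addrA subrK.
by rewrite (le_trans (ler_normB _ _)) // lerD.
Qed.

Variable f : R -> V.
Hypothesis hf : cadlag f.

Lemma cadlag_right_near u e : 0 <= u -> 0 < e ->
  exists2 d, 0 < d & forall w, `|u - w| < d -> u <= w -> `|f u - f w| <= e.
Proof.
move=> u0 e0; have /cvgrPdist_le/(_ e e0)/nbhs_ballP[d d0 fd] := hf.1 u u0.
exists d => // w uw; rewrite le_eqVlt => /predU1P[<-|]; first by rewrite subrr normr0 ltW.
exact: fd.
Qed.

Lemma cadlag_left_near u e : 0 < u -> 0 < e ->
  exists2 d, 0 < d & forall w, `|u - w| < d -> w < u -> `|left_lim f u - f w| <= e.
Proof.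
move=> u0 e0; have /cvgrPdist_le/(_ e e0)/nbhs_ballP[d d0 fd] := hf.2 u u0.
by exists d.
Qed.

Lemma cadlag_osc u e : 0 <= u -> 0 < e -> exists2 d, 0 < d &
  forall v w, 0 <= v -> 0 <= w -> `|u - v| < d -> `|u - w| < d ->
  [/\ u <= v -> u <= w -> `|f w - f v| <= e,
      v < u -> w < u -> `|f w - f v| <= e &
      v < u -> u <= w -> `|f w - f v - jump f u| <= e].
Proof.
move=> u0 e0; have e20 : 0 < e / 2 by rewrite divr_gt0.
have [d1 d10 fr] := cadlag_right_near u0 e20.
have [d2 d20 fl] : exists2 d2, 0 < d2 & forall w, 0 <= w -> `|u - w| < d2 -> w < u ->
    `|left_lim f u - f w| <= e / 2.
  have [up|] := ltP 0 u; last first.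
    by move=> u_le0; exists 1 => // w w0 _ /(le_lt_trans w0); rewrite ltNge u_le0.
  by have [d2 d20 fl] := cadlag_left_near up e20; exists d2 => // w _; exact: fl.
exists (Num.min d1 d2) => [|v w v0 w0]; first by rewrite lt_min d10 d20.
rewrite !lt_min => /andP[vd1 vd2] /andP[wd1 wd2]; rewrite [e]splitr.
split=> [uv uw|vu wu|vu uw]; first by apply: ler_dist_split; exact: fr.
  by apply: ler_dist_split; exact: fl.
have -> : f w - f v - jump f u = (left_lim f u - f v) - (f u - f w).
  by rewrite /jump !opprB addrACA [RHS]addrACA (addrC (left_lim f u)).
by rewrite (le_trans (ler_normB _ _)) // lerD ?fl ?fr.
Qed.

(* A jump of [f] at [w] is a limit of increments [f w - f v] with [v] on the
   same side of [u] as [w]; these are small by [cadlag_osc]. *)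
Lemma jump_small_near u e : 0 < u -> 0 < e -> exists2 d, 0 < d &
  forall w, 0 < w -> w != u -> `|u - w| < d -> `|jump f w| <= e.
Proof.
move=> u0 e0; have [d d0 osc] := cadlag_osc (ltW u0) e0.
exists d => // w w0 wu uwd; rewrite /jump; apply: (cvg_dist_le (hf.2 w w0)).
pose r := Num.min (d - `|u - w|) (Num.min w `|w - u|).
have r0 : 0 < r by rewrite !lt_min subr_gt0 uwd w0 normr_gt0 subr_eq0 wu.
rewrite /within /=; apply/nbhs_ballP; exists r => // v; rewrite /ball /= => wvr vw.
move: wvr; rewrite !lt_min (gtr0_norm (_ : 0 < w - v)) ?subr_gt0 //.
move=> /and3P[vd vw0 vwu].
have v0 : 0 <= v by move: vw0; rewrite ltrBlDl ltrDr => /ltW.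
have uvd : `|u - v| < d.
  rewrite -(subrK w u) -addrA (le_lt_trans (ler_normD _ _)) //.
  by rewrite -ltrBrDl (gtr0_norm (_ : 0 < w - v)) ?subr_gt0.
have [wu'|uw] := ltP w u.
  by have [_ + _] := osc v w v0 (ltW w0) uvd uwd; apply; rewrite ?(lt_trans vw).
have {}uw : u < w by rewrite lt_neqAle eq_sym wu.
have [+ _ _] := osc v w v0 (ltW w0) uvd uwd; apply; last exact: ltW.
by move: vwu; rewrite gtr0_norm ?subr_gt0 // ltrD2l ltrN2 => /ltW.
Qed.

End CadlagLocal.

Section Retime.
Variables (R : realType) (V : normedModType R) (f : R -> V).
Hypothesis hf : cadlag f.
Variable sg : nat -> R -> R.
Hypotheses (sg_ge0 : forall n s, 0 <= s -> 0 <= sg n s)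
  (sg_lt : forall n s u, 0 <= s -> s < u -> sg n s < sg n u)
  (sg_id : forall e, 0 < e -> \forall n \near \oo, forall s, 0 <= s -> `|sg n s - s| < e)
  (sg_fix : forall u, 0 < u -> jump f u != 0 -> \forall n \near \oo, sg n u = u).

(* If [s] and [sg n s] lie on different sides of [u], then [sg n u <> u], so
   [f] has no jump at [u] and [cadlag_osc] applies across [u]. *)
Lemma cadlag_retime_local e u : 0 < e -> 0 <= u ->
  \forall s \near (u : R) & n \near \oo, 0 <= s -> `|f (sg n s) - f s| <= e.
Proof.
move=> e0 u0; have [d d0 osc] := cadlag_osc hf u0 e0.
have d20 : 0 < d / 2 by rewrite divr_gt0.
exists (ball u (d / 2), [set n | (forall s, 0 <= s -> `|sg n s - s| < d / 2) /\
    (0 < u -> jump f u != 0 -> sg n u = u)]).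
  split; first exact: nbhsx_ballx.
  apply: filterI; first exact: sg_id.
  have [[up J]|nJ] := pselect (0 < u /\ jump f u != 0).
    by apply: filterS (sg_fix up J) => n ->.
  by apply/eventuallyP; exists 0%N => n _ up J; case: nJ.
move=> [s n] [/= us [sgn sgu]] s0; rewrite /ball /= in us.
have w0 := sg_ge0 n s0.
have uwd : `|u - sg n s| < d.
  rewrite -(subrK s u) -addrA (le_lt_trans (ler_normD _ _)) // [d]splitr ltrD //.
  by rewrite distrC sgn.
have usd : `|u - s| < d by rewrite (lt_le_trans us) // ler_pdivrMr // ler_pMr // ler1n.
have [same_right same_left cross] := osc s (sg n s) s0 w0 usd uwd.
have up_of v : 0 <= v -> v < u -> 0 < u by move=> v0 /(le_lt_trans v0).
have no_jump_up : s < u -> u <= sg n s -> jump f u = 0.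
  move=> su uw; apply/eqP; apply: contraT => J.
  by move: (sg_lt n s0 su); rewrite sgu ?(up_of s) // ltNge uw.
have no_jump_down : sg n s < u -> u <= s -> jump f u = 0.
  move=> wu us'; apply/eqP; apply: contraT => J; have up := up_of _ w0 wu.
  move: us'; rewrite le_eqVlt => /predU1P[su|/(sg_lt n (ltW up))].
    by move: wu; rewrite -su sgu ?ltxx.
  by rewrite sgu // => /(lt_trans wu); rewrite ltxx.
have [su|us'] := ltP s u; have [wu|uw] := ltP (sg n s) u.
- exact: same_left.
- by move: (cross su uw); rewrite no_jump_up ?subr0.
- have [_ _ /(_ wu us')] := osc (sg n s) s w0 s0 uwd usd.
  by rewrite no_jump_down ?subr0 // distrC.
- exact: same_right.
Qed.

Lemma cadlag_retime T e : 0 < e ->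
  \forall n \near \oo, forall s, 0 <= s -> s <= T -> `|f (sg n s) - f s| <= e.
Proof.
move=> e0; have cover := (compact_near_coveringP _).1 (@segment_compact R 0 T) nat
  \oo (fun n s => 0 <= s -> `|f (sg n s) - f s| <= e) (eventually_filter : Filter \oo).
have : \forall n \near \oo, `[0, T] `<=` (fun s => 0 <= s -> `|f (sg n s) - f s| <= e).
  apply: cover => u; rewrite /= in_itv /= => /andP[u0 _].
  by apply: filterS (cadlag_retime_local e0 u0) => -[s n].
by apply: filterS => n sT s s0 st; apply: sT => //; rewrite /= in_itv /= s0 st.
Qed.

End Retime.

Section CvgAlongRetime.
Variables (R : realType) (V : normedModType R) (f : R -> V) (v : nat -> R -> V).
Hypothesis hf : cadlag f.
Variables mu lam : nat -> R -> R.
Hypotheses (mu_tc : forall n, time_change (mu n)) (mu_id : cvg_to_id mu)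
  (v_mu : cvg_along mu v f)
  (lam_tc : forall n, time_change (lam n)) (lam_id : cvg_to_id lam)
  (lam_mu : forall u, 0 < u -> jump f u != 0 -> \forall n \near \oo, lam n u = mu n u).

Let sg n s := time_change_inv (mu n) (lam n s).

Let sg_ge0 n s : 0 <= s -> 0 <= sg n s.
Proof. by move=> s0; case: (time_change_invK (mu_tc n) (time_change_ge0 (lam_tc n) s0)). Qed.

Let mu_sg n s : 0 <= s -> mu n (sg n s) = lam n s.
Proof. by move=> s0; case: (time_change_invK (mu_tc n) (time_change_ge0 (lam_tc n) s0)). Qed.

Let sg_lt n s u : 0 <= s -> s < u -> sg n s < sg n u.
Proof.
move=> s0 su; have u0 := le_trans s0 (ltW su); rewrite ltNge; apply/negP => us.
have := time_change_le (mu_tc n) (sg_ge0 n u0) us.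
by rewrite !mu_sg // leNgt (proj1 (proj2 (lam_tc n)) _ _ s0 su).
Qed.

Let sg_id e : 0 < e -> \forall n \near \oo, forall s, 0 <= s -> `|sg n s - s| < e.
Proof.
move=> e0; have e30 : 0 < e / 3 by rewrite divr_gt0.
have [N1 muN] := mu_id e30; have [N2 lamN] := lam_id e30.
apply/eventuallyP; exists (maxn N1 N2) => n; rewrite geq_max => /andP[n1 n2] s s0.
have -> : sg n s - s = - (mu n (sg n s) - sg n s) + (lam n s - s).
  by rewrite mu_sg // opprB addrA subrK.
rewrite (le_lt_trans (ler_normD _ _)) // normrN (@le_lt_trans _ _ (e / 3 + e / 3)) //.
  by rewrite lerD ?muN ?lamN ?sg_ge0.
lra.
Qed.

Let sg_fix u : 0 < u -> jump f u != 0 -> \forall n \near \oo, sg n u = u.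
Proof.
move=> u0 J; apply: filterS (lam_mu u0 J) => n lm.
apply: (time_change_inj (mu_tc n)); rewrite ?sg_ge0 ?ltW //.
by rewrite mu_sg ?lm // ltW.
Qed.

(* [lam n = mu n \o sg n], and retiming [f] by [sg n] is harmless. *)
Lemma cvg_along_retime : cvg_along lam v f.
Proof.
move=> T T0 e e0; have e20 : 0 < e / 2 by rewrite divr_gt0.
have f_sg := cadlag_retime hf sg_ge0 sg_lt sg_id sg_fix T e20.
have [N v_muN] := v_mu (ltr_wpDr ler01 T0) e20.
apply/eventuallyP; near=> n.
have sgn1 : forall s, 0 <= s -> `|sg n s - s| < 1 by near: n; exact: sg_id.
move=> s s0 sT; have sg1 : sg n s <= T + 1.
  by move: (sgn1 s s0); rewrite ltr_norml => /andP[_]; lra.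
rewrite -mu_sg // -(subrK (f (sg n s)) (v n _)) -addrA (le_trans (ler_normD _ _)) //.
rewrite [e]splitr lerD ?v_muN ?sg_ge0 //; first by near: n; exists N.
by move: s s0 sT {sg1}; near: n.
Unshelve. all: by end_near.
Qed.

End CvgAlongRetime.

Lemma exists_nat_ge (R : realType) (T : R) : exists M : nat, T <= M%:R.
Proof.
exists (Num.Def.archi_bound (Num.max T 0)); apply: le_trans (ltW (archi_boundP _)).
  by rewrite le_max lexx.
by rewrite le_max lexx orbT.
Qed.

Section Envelope.
Variables (R : realType) (h : nat -> R -> R).
Hypotheses (h_le : forall n T T', T <= T' -> h n T <= h n T')
  (h_small : forall T e, 0 < e -> \forall n \near \oo, h n T <= e).

Definition envelope n := \big[Num.min/1]_(M < n.+1) Num.max (h n M%:R) M.+1%:R^-1.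

Lemma envelope_gt0 n : 0 < envelope n.
Proof.
apply/bigmin_gtP; split => // M _.
by rewrite lt_max invr_gt0 ltr0n orbT.
Qed.

Lemma envelope_small e : 0 < e -> \forall n \near \oo, envelope n <= e.
Proof.
move=> e0; have [M eM] := exists_nat_ge e^-1.
have Me : M.+1%:R^-1 <= e.
  rewrite -[e]invrK lef_pV2 ?posrE ?invr_gt0 ?ltr0n // (le_trans eM) //.
  by rewrite ler_nat.
near=> n; have Mn : (M < n.+1)%N by rewrite ltnS; near: n; exact: nbhs_infty_ge.
apply: le_trans (bigmin_le _ (Ordinal Mn) _) _ => /=; rewrite ge_max Me andbT.
by near: n; exact: h_small.
Unshelve. all: by end_near.
Qed.

Lemma envelope_ge T : \forall n \near \oo, h n T <= envelope n.
Proof.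
have [M TM] := exists_nat_ge T.
have M0 : 0 < M.+1%:R^-1 :> R by rewrite invr_gt0 ltr0n.
apply: filterS (h_small M%:R M0) => n hM; apply: le_trans (h_le n TM) _.
apply/bigmin_geP; split => [|N _]; first by rewrite (le_trans hM) // invf_le1 ?ler1n.
rewrite le_max; have [MN|NM] := leqP M N; first by rewrite h_le ?ler_nat.
apply/orP; right; apply: le_trans hM _.
by rewrite lef_pV2 ?posrE ?ltr0n // ler_nat ltnS ltnW.
Qed.

End Envelope.

Section Partition.
Variables (R : realType) (t : nat -> nat -> R) (k : nat -> nat).
Hypothesis hpi : partition_seq t k.

Lemma partition_seq0 n : t n 0%N = 0. Proof. by case: hpi. Qed.

Lemma partition_seq_lt n i : (i < k n)%N -> t n i < t n i.+1.
Proof. by case: hpi => _ [t_lt _]; exact: t_lt. Qed.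

Lemma partition_seq_le n i j : (i <= j <= k n)%N -> t n i <= t n j.
Proof. exact/incr_seq_le/partition_seq_lt. Qed.

Lemma partition_seq_ge0 n i : (i <= k n)%N -> 0 <= t n i.
Proof. by move=> ik; rewrite -(partition_seq0 n) partition_seq_le. Qed.

Lemma partition_seq_end M : \forall n \near \oo, M < t n (k n).
Proof. by case: hpi => _ [_ [_ [end_oo _]]]; apply/eventuallyP. Qed.

Lemma partition_seq_mesh T e : 0 < T -> 0 < e -> \forall n \near \oo,
  forall i, (i < k n)%N -> t n i <= T -> t n i.+1 - t n i <= e.
Proof. by case: hpi => _ [_ [_ [_ mesh0]]] T0 e0; apply/eventuallyP; exact: mesh0. Qed.

Lemma partition_seq_cell n u : 0 < u -> u <= t n (k n) ->
  exists j, [/\ (j < k n)%N, t n j < u & u <= t n j.+1].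
Proof.
move=> u0; suff cell K : (K <= k n)%N -> u <= t n K ->
    exists j, [/\ (j < K)%N, t n j < u & u <= t n j.+1] by exact: cell.
elim: K => [|K IH] Kk uK; first by move: uK; rewrite partition_seq0 leNgt u0.
have [uK'|Ku] := leP u (t n K); last by exists K.
by have [j [jK tj uj]] := IH (ltnW Kk) uK'; exists j; split => //; exact: ltnW.
Qed.

Lemma partition_seq_cell_uniq n u i j : (i < k n)%N -> (j < k n)%N ->
  t n i < u -> u <= t n i.+1 -> t n j < u -> u <= t n j.+1 -> i = j.
Proof.
move=> ik jk ti ui tj uj.
have before p q : (q < k n)%N -> (p < q)%N -> t n q < u -> u <= t n p.+1 -> False.
  move=> qk pq tq up; have := @partition_seq_le n p.+1 q; rewrite pq (ltnW qk) => /(_ isT).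
  by move=> /(le_trans up) /(lt_le_trans tq); rewrite ltxx.
apply/eqP; rewrite eqn_leq; apply/andP; split; rewrite leqNgt; apply/negP => ?.
- exact: (before j i).
- exact: (before i j).
Qed.

Definition mesh_upto n T :=
  \big[Num.max/0]_(i < k n | t n i <= T) (t n i.+1 - t n i).

Lemma cell_le_mesh n T i : (i < k n)%N -> t n i <= T -> t n i.+1 - t n i <= mesh_upto n T.
Proof.
move=> ik tT; rewrite /mesh_upto.
exact: (le_bigmax_cond _ (fun j : 'I_(k n) => t n j.+1 - t n j) (j := Ordinal ik)).
Qed.

Lemma mesh_upto_le n T T' : T <= T' -> mesh_upto n T <= mesh_upto n T'.
Proof.
move=> TT'; apply/bigmax_leP; split=> [|i tT]; first exact: bigmax_ge_id.
exact: cell_le_mesh (le_trans tT TT').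
Qed.

Lemma mesh_upto_small T e : 0 < e -> \forall n \near \oo, mesh_upto n T <= e.
Proof.
move=> e0; have T10 : 0 < Num.max T 0 + 1 by rewrite ltr_pwDr // le_max lexx orbT.
apply: filterS (partition_seq_mesh T10 e0) => n cell_e.
apply: le_trans (mesh_upto_le n (_ : T <= Num.max T 0 + 1)) _.
  by rewrite ler_wpDr // le_max lexx.
by apply/bigmax_leP; split=> [|i ti]; [exact: ltW | exact: cell_e].
Qed.

Lemma cell_le_envelope T : \forall n \near \oo,
  forall i, (i < k n)%N -> t n i <= T -> t n i.+1 - t n i <= envelope mesh_upto n.
Proof.
apply: filterS (envelope_ge mesh_upto_le mesh_upto_small T) => n mesh_env i ik tT.
exact: le_trans (cell_le_mesh ik tT) mesh_env.
Qed.

End Partition.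

Section QuadraticVariation.
Variables (R : realType) (t : nat -> nat -> R) (k : nat -> nat).
Hypothesis hpi : partition_seq t k.
Variables (m : nat) (x : R -> 'cV[R]_m).
Hypothesis hx : cadlag x.

Definition incr n j : 'cV[R]_m := x (t n j.+1) - x (t n j).
Definition incr2 (a b : 'I_m) n j := incr n j a 0 * incr n j b 0.

Lemma qvar_entryE a b n s :
  qvar t k x n s a b = \sum_(i < k n | t n i <= s) incr2 a b n i.
Proof.
rewrite /qvar summxE; apply: eq_bigr => i _.
by rewrite mxE big_ord1 !mxE /incr2 /incr !mxE.
Qed.

Lemma incr2_le a b n j r : `|incr n j| <= r -> `|incr2 a b n j| <= r * r.
Proof.
move=> incr_r; rewrite normrM.
by apply: ler_pM => //; exact: le_trans (mx_entry_norm_le _ _ _) incr_r.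
Qed.

(* Just left of [v] the step function [qvar] is constant, so its increment
   there comes from a partition point at [v] only. *)
Lemma qvar_entry_increment a b n v y0 : y0 < v -> exists2 y, y0 < y < v &
  qvar t k x n v a b - qvar t k x n y a b = \sum_(i < k n | t n i == v) incr2 a b n i.
Proof.
move=> y0v; set M := \big[Num.max/y0]_(i < k n | t n i < v) t n i.
have Mv : M < v by apply/bigmax_ltP.
have y0M : y0 <= M by exact: bigmax_ge_id.
have below (i : 'I_(k n)) : t n i < v -> t n i <= M.
  by move=> tv; exact: (le_bigmax_cond _ (fun i : 'I_(k n) => t n i) tv).
exists ((M + v) / 2); first by apply/andP; split; lra.
rewrite !qvar_entryE (bigID (fun i : 'I_(k n) => t n i <= (M + v) / 2)) /=.
have -> : \sum_(i < k n | (t n i <= v) && (t n i <= (M + v) / 2)) incr2 a b n i =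
    \sum_(i < k n | t n i <= (M + v) / 2) incr2 a b n i.
  apply: eq_bigl => i; apply/andP/idP => [[] //|ti]; split=> //; lra.
rewrite addrC addrK; apply: eq_bigl => i; rewrite -ltNge.
apply/andP/eqP => [[tv Mt]|->]; last by split=> //; lra.
apply/eqP; rewrite eq_le tv leNgt; apply/negP => /below; lra.
Qed.

Lemma big_at_partition_point n (v : R) (F : 'I_(k n) -> R) :
  \sum_(i < k n | t n i == v) F i != 0 ->
  exists i : 'I_(k n), t n i = v /\ \sum_(i < k n | t n i == v) F i = F i.
Proof.
case: (pickP (fun i : 'I_(k n) => t n i == v)) => [i /eqP ti _|none]; last first.
  by rewrite big_pred0 ?eqxx.
exists i; split => //; apply: big_pred1 => j /=; rewrite -ti.
apply/eqP/eqP => [tij|-> //]; apply/val_inj.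
exact: (incr_seq_inj (@partition_seq_lt _ _ _ hpi n)) (ltnW (ltn_ord j)) (ltnW (ltn_ord i)) tij.
Qed.

Lemma incr_large_straddles a b u c : 0 < u -> 0 < c -> exists2 d, 0 < d &
  forall n j, (j < k n)%N -> `|u - t n j| < d -> `|u - t n j.+1| < d ->
    c <= `|incr2 a b n j| -> [/\ t n j < u, u <= t n j.+1 & jump x u != 0].
Proof.
move=> u0 c0; pose eta := Num.min 1 c / 2.
have eta0 : 0 < eta by rewrite divr_gt0 // lt_min ltr01 c0.
have eta2c : eta * eta < c.
  have m1 : Num.min 1 c <= 1 by rewrite ge_min lexx.
  have mc : Num.min 1 c <= c by rewrite ge_min lexx orbT.
  have m0 : 0 < Num.min 1 c by rewrite lt_min ltr01 c0.
  rewrite /eta; nra.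
have [d d0 osc] := cadlag_osc hx (ltW u0) eta0.
exists d => // n j jk uj uj1 c_incr.
have t0 := partition_seq_ge0 hpi (ltnW jk); have t1 := partition_seq_ge0 hpi jk.
have tj := partition_seq_lt hpi jk.
have [right left across] := osc _ _ t0 t1 uj uj1.
have big : `|incr n j| <= eta -> False.
  by move=> /(incr2_le a b) /(le_trans c_incr); lra.
have tju : t n j < u.
  by rewrite ltNge; apply/negP => ut; apply/big/right => //; exact: le_trans ut (ltW tj).
have utj : u <= t n j.+1.
  by rewrite leNgt; apply/negP => tu; apply/big/left => //; exact: lt_trans tj tu.
split=> //; apply/negP => /eqP J0; apply: big.
by move: (across tju utj); rewrite J0 subr0.
Qed.

End QuadraticVariation.

Section JumpAlignment.
Variables (R : realType) (t : nat -> nat -> R) (k : nat -> nat).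
Hypothesis hpi : partition_seq t k.
Variables (m : nat) (x : R -> 'cV[R]_m).
Hypothesis hx : cadlag x.
Variables (a b : 'I_m) (g : R -> R) (mu : nat -> R -> R).
Hypotheses (hg : cadlag g) (mu_tc : forall n, time_change (mu n))
  (mu_id : cvg_to_id mu) (q_mu : cvg_along mu (fun n s => qvar t k x n s a b) g).
Variable u : R.
Hypotheses (u0 : 0 < u) (g_jump : jump g u != 0).

(* Compare [qvar] at [mu n u] and just before it, where it is close to [g u]
   and to the left limit of [g] at [u] respectively. *)
Lemma qvar_jump_partition_point : \forall n \near \oo, exists j, [/\ (j < k n)%N,
  t n j = mu n u & `|jump g u| / 4 <= `|incr2 t x a b n j|].
Proof.
set e := `|jump g u| / 4; have e0 : 0 < e by rewrite divr_gt0 ?normr_gt0.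
have [d1 d10 g_left] := cadlag_left_near hg u0 e0.
have [del [del0 del_d1 del_u]] : exists del, [/\ 0 < del, del < d1 & del < u].
  have m0 : 0 < Num.min d1 u by rewrite lt_min d10 u0.
  have m1 : Num.min d1 u <= d1 by rewrite ge_min lexx.
  have m2 : Num.min d1 u <= u by rewrite ge_min lexx orbT.
  by exists (Num.min d1 u / 2); split; lra.
have [N qN] := q_mu u0 e0.
apply/eventuallyP; exists N => n Nn.
have [_ [mu_lt _]] := mu_tc n.
have y0v : mu n (u - del) < mu n u by apply: mu_lt; lra.
have [y /andP[y0y yv] q_incr] := qvar_entry_increment t k x a b n y0v.
have y0 : 0 <= y.
  by apply: le_trans (ltW y0y); apply: (time_change_ge0 (mu_tc n)); lra.
have [s0 mus] := time_change_invK (mu_tc n) y0; set s := time_change_inv _ _ in s0 mus.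
have su : s < u.
  by rewrite ltNge; apply/negP => /(time_change_le (mu_tc n) (ltW u0)); rewrite mus leNgt yv.
have us : u - del < s.
  by rewrite ltNge; apply/negP => /(time_change_le (mu_tc n) s0); rewrite mus leNgt y0y.
have gs : `|left_lim g u - g s| <= e.
  by apply: (g_left s _ su); rewrite gtr0_norm ?subr_gt0 //; lra.
have qu := qN n Nn u (ltW u0) (lexx u).
have := qN n Nn s s0 (ltW su); rewrite mus => qs.
set Q := qvar t k x n (mu n u) a b - qvar t k x n y a b.
have eQ : e <= `|Q|.
  set A := Q - (qvar t k x n (mu n u) a b - g u).
  set B := qvar t k x n y a b - g s.
  have hJ : jump g u = A + B - (left_lim g u - g s) by rewrite /jump /A /B /Q; ring.
  have J4 : `|jump g u| = 4 * e by rewrite /e mulrC divfK.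
  have := ler_normB (A + B) (left_lim g u - g s); rewrite -hJ J4.
  have := ler_normD A B; have := ler_normB Q (qvar t k x n (mu n u) a b - g u).
  rewrite -/A; lra.
have Q0 : \sum_(i < k n | t n i == mu n u) incr2 t x a b n i != 0.
  by rewrite -q_incr -normr_gt0 (lt_le_trans e0).
have [i [ti Qi]] := big_at_partition_point hpi Q0.
by exists i; rewrite ltn_ord ti -Qi -q_incr.
Qed.

Lemma qvar_jump_straddle : \forall n \near \oo, exists j, [/\ (j < k n)%N,
  t n j = mu n u, t n j < u, u <= t n j.+1 & jump x u != 0].
Proof.
have c0 : 0 < `|jump g u| / 4 by rewrite divr_gt0 ?normr_gt0.
have [d d0 straddle] := incr_large_straddles hpi hx a b u0 c0.
have [r [r0 r_d r1]] : exists r, [/\ 0 < r, r * 2 < d & r <= 1].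
  have m0 : 0 < Num.min d 1 by rewrite lt_min d0 ltr01.
  have md : Num.min d 1 <= d by rewrite ge_min lexx.
  have m1 : Num.min d 1 <= 1 by rewrite ge_min lexx orbT.
  by exists (Num.min d 1 / 4); split; lra.
have [N muN] := mu_id r0.
have u10 : 0 < u + 1 := addr_gt0 u0 ltr01.
near=> n.
have [j [jk tj cj]] : exists j, [/\ (j < k n)%N, t n j = mu n u &
    `|jump g u| / 4 <= `|incr2 t x a b n j|] by near: n; exact: qvar_jump_partition_point.
have mesh_r : forall i, (i < k n)%N -> t n i <= u + 1 -> t n i.+1 - t n i <= r.
  by near: n; exact: (partition_seq_mesh hpi u10 r0).
have mud : `|mu n u - u| <= r by apply: muN (ltW u0); near: n; exact: nbhs_infty_ge.
move: mud; rewrite -tj ler_norml => /andP[tjl tjr].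
have cell_r : t n j.+1 - t n j <= r by apply: mesh_r => //; lra.
have tjj := partition_seq_lt hpi jk.
have tjd : `|u - t n j| < d by rewrite ltr_norml; apply/andP; split; lra.
have tj1d : `|u - t n j.+1| < d by rewrite ltr_norml; apply/andP; split; lra.
by have [tju utj xJ] := straddle n j jk tjd tj1d cj; exists j.
Unshelve. all: by end_near.
Qed.

Lemma qvar_jump_is_jump : jump x u != 0.
Proof. by have [n [j [_ _ _ _ ->]]] := filter_ex qvar_jump_straddle. Qed.

End JumpAlignment.

Section Knots.
Variables (R : realType) (t : nat -> nat -> R) (k : nat -> nat).
Hypothesis hpi : partition_seq t k.
Variables (m : nat) (x : R -> 'cV[R]_m).
Hypothesis hx : cadlag x.

(* Only short cells may move their knot, so that knots stay uniformly close to
   the partition; [0 < j] keeps the first knot at [0]. *)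
Definition small_cell n j :=
  [&& (0 < j)%N, (j < k n)%N & t n j.+1 - t n j <= envelope (mesh_upto t k) n].

(* The right end point may be a site only if the next knot moves as well,
   which keeps the knots strictly increasing. *)
Definition jump_site n j w := [/\ t n j < w, w <= t n j.+1,
  w < t n j.+1 \/ small_cell n j.+1, jump x w != 0 &
  forall w', t n j < w' -> w' <= t n j.+1 -> `|jump x w'| <= `|jump x w| *+ 2].

Definition knot n j :=
  if small_cell n j then xget ((t n j + t n j.+1) / 2) (jump_site n j) else t n j.

Definition common_time_change n := pl_interp (knot n) (t n) (k n).

Lemma knot_small n j : small_cell n j ->
  [/\ t n j < knot n j, knot n j <= t n j.+1 & knot n j < t n j.+1 \/ small_cell n j.+1].
Proof.
move=> sm; have /and3P[_ jk _] := sm; have tj := partition_seq_lt hpi jk.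
rewrite /knot sm; case: (pselect (exists w, jump_site n j w)) => [ex|nex].
  by have [] := xgetPex ((t n j + t n j.+1) / 2) ex.
rewrite xgetPN; last by move=> w site; apply: nex; exists w.
by split; [lra | lra | left; lra].
Qed.

Lemma knot_not_small n j : ~~ small_cell n j -> knot n j = t n j.
Proof. by rewrite /knot => /negbTE ->. Qed.

Lemma knot_ge n j : t n j <= knot n j.
Proof.
have [sm|nsm] := boolP (small_cell n j); last by rewrite knot_not_small.
by have [/ltW] := knot_small sm.
Qed.

Lemma knot0 n : knot n 0 = 0.
Proof. by rewrite knot_not_small // (partition_seq0 hpi). Qed.

Lemma knot_lt n j : (j < k n)%N -> knot n j < knot n j.+1.
Proof.
move=> jk; have tj := partition_seq_lt hpi jk.
have [sm|nsm] := boolP (small_cell n j); last first.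
  by rewrite knot_not_small // (lt_le_trans tj) ?knot_ge.
have [_ kj [kj1|sm1]] := knot_small sm; first exact: lt_le_trans kj1 (knot_ge _ _).
by have [kj1 _ _] := knot_small sm1; exact: le_lt_trans kj kj1.
Qed.

Lemma knot_dev n j : `|knot n j - t n j| <= envelope (mesh_upto t k) n.
Proof.
have [sm|nsm] := boolP (small_cell n j); last first.
  by rewrite knot_not_small // subrr normr0 ltW ?envelope_gt0.
have [tk kt _] := knot_small sm; have /and3P[_ _ cell] := sm.
by rewrite ger0_norm ?subr_ge0 ?(ltW tk) //; lra.
Qed.

Lemma common_time_changeP n : time_change (common_time_change n).
Proof.
apply: pl_interp_time_change; [exact: knot0 | exact: (partition_seq0 hpi) |
  exact: knot_lt | exact: (partition_seq_lt hpi)].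
Qed.

Lemma common_time_change_knot n j : (j <= k n)%N ->
  common_time_change n (knot n j) = t n j.
Proof.
by apply: pl_interp_knot; [exact: (partition_seq0 hpi) | exact: knot_lt].
Qed.

Lemma common_time_change_to_id : cvg_to_id common_time_change.
Proof.
move=> e e0; apply/eventuallyP.
apply: filterS (envelope_small (mesh_upto_small hpi) e0) => n env s s0.
apply: le_trans env; apply: pl_interp_dev => //;
  [exact: knot0 | exact: (partition_seq0 hpi) | exact: knot_lt | move=> j _; exact: knot_dev].
Qed.

(* Near a jump of [x], all other jumps are much smaller, and the cells around it
   are short. *)
Lemma jump_site_of_jump u : 0 < u -> jump x u != 0 -> \forall n \near \oo,
  exists j, [/\ (j < k n)%N, small_cell n j, jump_site n j u &
    forall w, t n j < w -> w <= t n j.+1 -> w != u -> `|jump x w| *+ 2 < `|jump x u|].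
Proof.
move=> u0 J; set c := `|jump x u|; have c0 : 0 < c by rewrite normr_gt0.
have c40 : 0 < c / 4 by rewrite divr_gt0.
have [dj dj0 jump_small] := jump_small_near hx u0 c40.
have [r [r0 r_dj r_u]] : exists r, [/\ 0 < r, r < dj & r < u].
  have m0 : 0 < Num.min dj u by rewrite lt_min dj0 u0.
  have m1 : Num.min dj u <= dj by rewrite ge_min lexx.
  have m2 : Num.min dj u <= u by rewrite ge_min lexx orbT.
  by exists (Num.min dj u / 2); split; lra.
have u10 : 0 < u + 1 := addr_gt0 u0 ltr01.
near=> n.
have end_u : u < t n (k n) by near: n; exact: partition_seq_end.
have mesh_r : forall i, (i < k n)%N -> t n i <= u + 1 -> t n i.+1 - t n i <= r.
  by near: n; exact: (partition_seq_mesh hpi u10 r0).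
have mesh_env : forall i, (i < k n)%N -> t n i <= u + 1 ->
    t n i.+1 - t n i <= envelope (mesh_upto t k) n.
  by near: n; exact: cell_le_envelope.
have [j [jk tj uj]] := partition_seq_cell hpi u0 (ltW end_u).
have tju1 : t n j <= u + 1 by lra.
have cell_r := mesh_r j jk tju1.
have j0 : (0 < j)%N.
  by rewrite lt0n; apply/negP => /eqP j0; move: cell_r uj; rewrite j0 (partition_seq0 hpi); lra.
have sm : small_cell n j by rewrite /small_cell j0 jk mesh_env.
have tj0 := partition_seq_ge0 hpi (ltnW jk).
have others w : t n j < w -> w <= t n j.+1 -> w != u -> `|jump x w| <= c / 4.
  move=> tw wt wu; apply: jump_small => //; first exact: le_lt_trans tj0 tw.
  by rewrite ltr_norml; apply/andP; split; lra.
exists j; split=> // [|w tw wt wu]; last by move: (others w tw wt wu); lra.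
split=> // [|w tw wt].
  have [ut|tu] := ltP u (t n j.+1); [by left | right].
  have tu' : t n j.+1 = u by apply/le_anti; rewrite tu uj.
  have j1k : (j.+1 < k n)%N.
    by rewrite ltn_neqAle jk andbT; apply: contraTneq end_u => <-; rewrite tu' ltxx.
  by rewrite /small_cell j1k mesh_env // tu'; lra.
have [->|wu] := eqVneq w u; first by rewrite -/c; lra.
by move: (others w tw wt wu); rewrite -/c; lra.
Unshelve. all: by end_near.
Qed.

Lemma knot_at_jump u : 0 < u -> jump x u != 0 -> \forall n \near \oo,
  exists j, [/\ (j < k n)%N, t n j < u, u <= t n j.+1 & knot n j = u].
Proof.
move=> u0 J; apply: filterS (jump_site_of_jump u0 J) => n [j [jk sm site others]].
have [tj uj _ _ _] := site; exists j; split=> //; rewrite /knot sm.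
have [tw wt _ _ w_max] := xgetPex ((t n j + t n j.+1) / 2) (ex_intro _ u site).
set w := xget _ _ in tw wt w_max *.
apply/eqP; apply: contraT => wu.
by move: (others w tw wt wu) (w_max u tj uj); rewrite ltNge => /negP.
Qed.

Variables (a b : 'I_m) (g : R -> R) (mu : nat -> R -> R).
Hypotheses (hg : cadlag g) (mu_tc : forall n, time_change (mu n))
  (mu_id : cvg_to_id mu) (q_mu : cvg_along mu (fun n s => qvar t k x n s a b) g).

Lemma common_time_change_at_jump u : 0 < u -> jump g u != 0 ->
  \forall n \near \oo, common_time_change n u = mu n u.
Proof.
move=> u0 J; have Jx := qvar_jump_is_jump hpi hx hg mu_tc mu_id q_mu u0 J.
near=> n.
have [i [ik ti tiu uti _]] : exists i, [/\ (i < k n)%N, t n i = mu n u, t n i < u,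
    u <= t n i.+1 & jump x u != 0].
  by near: n; exact: (qvar_jump_straddle hpi hx hg mu_tc mu_id q_mu u0 J).
have [j [jk tj uj kj]] : exists j, [/\ (j < k n)%N, t n j < u, u <= t n j.+1 &
    knot n j = u] by near: n; exact: knot_at_jump.
rewrite -{1}kj common_time_change_knot ?(ltnW jk) // -ti.
by rewrite (partition_seq_cell_uniq hpi jk ik tj uj tiu uti).
Unshelve. all: by end_near.
Qed.

End Knots.

Theorem proposition3p5 (R : realType) (m : nat) (t : nat -> nat -> R)
  (k : nat -> nat) (hpi : partition_seq t k)
  (x : R -> 'cV[R]_m) (hx : cadlag x) :
  D_convergent (qvar t k x) <->
  (forall i j : 'I_m, D_convergent (fun n s => qvar t k x n s i j)).
Proof.
split=> [q_cvg i j|q_cvg]; first exact: D_convergent_mx_entry.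
have /choice[F F_cvg] : forall ij : 'I_m * 'I_m, exists p : (R -> R) * (nat -> R -> R),
    cadlag p.1 /\ [/\ forall n, time_change (p.2 n), cvg_to_id p.2 &
      cvg_along p.2 (fun n s => qvar t k x n s ij.1 ij.2) p.1].
  by move=> [i j]; have [f [fc]] := q_cvg i j; rewrite J1_cvgE => -[mu mu_cvg]; exists (f, mu).
pose f s := \matrix_(i, j) (F (i, j)).1 s.
have fE i j : (fun s => f s i j) = (F (i, j)).1 by apply/funext => s; rewrite mxE.
exists f; split.
  by apply/cadlag_mxP => i j; rewrite fE; case: (F_cvg (i, j)).
rewrite J1_cvgE; exists (common_time_change t k x); split.
- exact: common_time_changeP.
- exact: common_time_change_to_id.
apply/cvg_alongP => i j; rewrite fE.
have [fc [mu_tc mu_id q_mu]] := F_cvg (i, j).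
apply: (cvg_along_retime fc mu_tc mu_id q_mu (common_time_changeP hpi x)
  (common_time_change_to_id hpi x)) => u u0 J.
exact: (common_time_change_at_jump hpi hx fc mu_tc mu_id q_mu u0 J).
Qed.
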